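(* For the $2$-server problem on the line, for any instance $I$, any prediction, and any $\lambda\in[0,1]$, there is $c\ge0$ depending only on the initial configuration such that $\mathrm{LambdaDC}(I)\le(1+\lambda)\cdot\mathrm{FtP}(I)+c$.
   Context: The $2$-server problem on the line: servers on $\mathbb{R}$ labeled $s_1\le s_2$, requests revealed online and served by moving a server to them; cost = total distance moved. A prediction gives for each request $r_t$ an index $p_t\in\{1,2\}$; FtP is the algorithm serving each request by the predicted server (relabeling servers by position), and $\mathrm{FtP}(I)$ its cost for the given prediction. LambdaDC (given the same prediction): if $r_t<s_1$ or $r_t>s_2$, move only the closest server; if $s_1<r_t<s_2$ and $p_t=1$, move $s_1$ at speed $1$ and $s_2$ at speed $\lambda$ towards $r_t$ until one reaches it; if $p_t=2$, the speeds are swapped. *)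

From Stdlib Require Import Reals List.
Open Scope R_scope.

(* Server index predicted for a request: p_t in {1,2}. *)
Inductive idx : Type := One | Two.

(* A configuration is a pair (s1, s2) of server positions with s1 <= s2
   (servers relabeled by position). *)
Definition config := (R * R)%type.

(* One step of FtP: move the predicted server to r, then relabel by position.
   Returns (cost of the step, new configuration). *)
Definition ftp_step (p : idx) (c : config) (r : R) : R * config :=
  let (a, b) := c in
  match p with
  | One => (Rabs (a - r), (Rmin r b, Rmax r b))
  | Two => (Rabs (b - r), (Rmin a r, Rmax a r))
  end.

(* Outside [s1,s2]: move only the closest server.
   Strictly inside, p = 1: s1 at speed 1, s2 at speed lam towards r until one
   reaches r (s1 reaches first iff lam*(r-s1) <= s2-r; otherwise lam > 0 and
   s2 reaches first after time (s2-r)/lam).  p = 2: speeds swapped. *)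
Definition ldc_step (lam : R) (p : idx) (c : config) (r : R) : R * config :=
  let (a, b) := c in
  if Rle_dec r a then (a - r, (r, b))
  else if Rle_dec b r then (r - b, (a, r))
  else match p with
  | One =>
      if Rle_dec (lam * (r - a)) (b - r)
      then ((r - a) + lam * (r - a), (r, b - lam * (r - a)))
      else ((b - r) / lam + (b - r), (a + (b - r) / lam, r))
  | Two =>
      if Rle_dec (lam * (b - r)) (r - a)
      then ((b - r) + lam * (b - r), (a + lam * (b - r), r))
      else ((r - a) + (r - a) / lam, (r, b - (r - a) / lam))
  end.

Fixpoint run_cost (step : idx -> config -> R -> R * config)
    (c : config) (t : nat) (rs : list R) (p : nat -> idx) : R :=
  match rs with
  | nil => 0
  | r :: rs' =>
      let (k, c') := step (p t) c r in
      k + run_cost step c' (S t) rs' p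
  end.

(* Instance I = (initial configuration (x1,x2), requests rs); times start at 0. *)
Definition FtP (x1 x2 : R) (rs : list R) (p : nat -> idx) : R :=
  run_cost ftp_step (x1, x2) 0 rs p.

Definition LambdaDC (lam : R) (x1 x2 : R) (rs : list R) (p : nat -> idx) : R :=
  run_cost (ldc_step lam) (x1, x2) 0 rs p.

From Stdlib Require Import Reals List Lra Psatz.
Open Scope R_scope.

(* Amortized analysis with the potential
     Phi = (1 + lam) * M + lam * (s2 - s1),
   where M is the cost of the sorted matching between the LambdaDC servers
   (s1, s2) and the FtP servers.  Case by case, one step of LambdaDC plus the
   change of Phi costs at most (1 + lam) times the FtP step: if FtP moves a
   server by d, M grows by at most d; when LambdaDC moves its two servers
   towards a request inside [s1, s2], the fast server is the predicted one,
   matched to the server FtP moves onto the request, so M decreases by at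
   least the fast distance while the spread term pays for the slow one.  Summing over
   the requests, LambdaDC <= (1 + lam) FtP + Phi_0 - Phi_end, and
   0 <= Phi_end, Phi_0 = lam (x2 - x1) <= x2 - x1. *)

Definition ordered (c : config) : Prop := fst c <= snd c.

Definition potential (lam : R) (c y : config) : R :=
  (1 + lam) * (Rabs (fst c - fst y) + Rabs (snd c - snd y))
  + lam * (snd c - fst c).

Lemma potential_ge0 (lam : R) (c y : config) :
  0 <= lam -> ordered c -> 0 <= potential lam c y.
Proof.
  unfold ordered, potential; intros Hlam Hc.
  pose proof (Rabs_pos (fst c - fst y)).
  pose proof (Rabs_pos (snd c - snd y)).
  nra.
Qed.

Lemma potential_diag (lam x1 x2 : R) :
  potential lam (x1, x2) (x1, x2) = lam * (x2 - x1).
Proof.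
  unfold potential; simpl.
  unfold Rminus; rewrite !Rplus_opp_r, Rabs_R0; ring.
Qed.

Lemma ftp_step_ordered (p : idx) (y : config) (r : R) :
  ordered (snd (ftp_step p y r)).
Proof.
  destruct y as [y1 y2], p; unfold ordered; simpl; apply Rminmax.
Qed.

(* In the branches where the slow server reaches the request first, the fast
   server travels gap / lam; naming this distance d, with lam * d = gap,
   keeps the case analysis polynomial, so that nra can close each case. *)
Ltac ldc_step_cases :=
  repeat match goal with |- context [Rle_dec ?u ?v] => destruct (Rle_dec u v) end;
  try match goal with
  | |- context [?gap / ?lam] =>
      assert (lam * (gap / lam) = gap) by (field; nra);
      generalize dependent (gap / lam); intros
  end;
  simpl in *; unfold Rmin, Rmax, Rabs;
  repeat match goal with
  | |- context [Rcase_abs ?u] => destruct (Rcase_abs u)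
  | |- context [Rle_dec ?u ?v] => destruct (Rle_dec u v)
  end;
  nra.

Lemma ldc_step_ordered (lam : R) (p : idx) (c : config) (r : R) :
  0 <= lam -> ordered c -> ordered (snd (ldc_step lam p c r)).
Proof.
  destruct c as [a b], p; unfold ordered, ldc_step; simpl; intros; ldc_step_cases.
Qed.

Lemma ldc_step_amortized (lam : R) (p : idx) (c y : config) (r : R) :
  0 <= lam <= 1 -> ordered c -> ordered y ->
  fst (ldc_step lam p c r)
    + potential lam (snd (ldc_step lam p c r)) (snd (ftp_step p y r))
  <= (1 + lam) * fst (ftp_step p y r) + potential lam c y.
Proof.
  destruct c as [a b], y as [y1 y2], p; unfold ordered, potential, ldc_step;
    simpl; intros; ldc_step_cases.
Qed.

Lemma run_cost_amortized (lam : R) (p : nat -> idx) (rs : list R) :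
  0 <= lam <= 1 ->
  forall (t : nat) (c y : config), ordered c -> ordered y ->
  run_cost (ldc_step lam) c t rs p
  <= (1 + lam) * run_cost ftp_step y t rs p + potential lam c y.
Proof.
  intros Hlam; induction rs as [|r rs IH]; intros t c y Hc Hy; simpl.
  - pose proof (potential_ge0 lam c y (proj1 Hlam) Hc); lra.
  - pose proof (ldc_step_amortized lam (p t) c y r Hlam Hc Hy) as Hstep.
    pose proof (ldc_step_ordered lam (p t) c r (proj1 Hlam) Hc) as Hc'.
    pose proof (ftp_step_ordered (p t) y r) as Hy'.
    destruct (ldc_step lam (p t) c r) as [kl c'], (ftp_step (p t) y r) as [kf y'].
    simpl in *.
    pose proof (IH (S t) c' y' Hc' Hy'); lra.
Qed.

Theorem lemma5 (x1 x2 : R) (hx : x1 <= x2) :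
  exists c : R, 0 <= c /\
    forall (rs : list R) (p : nat -> idx) (lam : R),
      0 <= lam <= 1 ->
      LambdaDC lam x1 x2 rs p <= (1 + lam) * FtP x1 x2 rs p + c.
Proof.
  exists (x2 - x1); split; [lra|].
  intros rs p lam Hlam; unfold LambdaDC, FtP.
  pose proof (run_cost_amortized lam p rs Hlam 0 (x1, x2) (x1, x2) hx hx) as Hrun.
  rewrite potential_diag in Hrun.
  nra.
Qed.
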